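(* Let $\mathcal{X}$ be a set, $p\ge1$, $0<\alpha\le1$, $\kappa_1$ a positive definite kernel on $\mathcal{X}^p$ and $\kappa_2$ a positive definite kernel on $\mathcal{X}$. Let $\mathbf{x},\mathbf{x}'$ be time series in $\mathcal{X}$ of lengths $n,n'>p$, with $\mathbf{K}_1,\mathbf{K}_2,\Delta,g,f,C_{n,n'},\varphi_\kappa$ as in the context. Let $\mathbf{G}_1,\mathbf{G}_2\in\mathbf{S}_N^+$ satisfy $\mathbf{G}_1\preceq\mathbf{K}_1$ and $\mathbf{G}_2\preceq\mathbf{K}_1+\mathbf{K}_2$, and set $\varepsilon_1=\mathbf{K}_1-\mathbf{G}_1$, $\varepsilon_2=\mathbf{K}_1+\mathbf{K}_2-\mathbf{G}_2$. Then $$e^{-\varphi_\kappa(\mathbf{x},\mathbf{x}')}\le e^{-C_{n,n'}-f(\mathbf{G}_1,\mathbf{G}_2)}\le(1+\rho)\,e^{-\varphi_\kappa(\mathbf{x},\mathbf{x}')},$$ where $\rho=\exp\big((1-\alpha)\|\nabla g(\mathbf{G}_1)\|\,\|\varepsilon_1\|+\alpha\|\nabla g(\mathbf{G}_2)\|\,\|\varepsilon_2\|\big)-1$, with $\nabla g(Q)=(Q+\Delta^{-1})^{-1}$ and $\|\cdot\|$ the Frobenius norm.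
   Context: For $\mathbf{x}=(x_1,\dots,x_n)$, $\mathbf{x}_i^j=(x_i,\dots,x_j)$; $X=(\mathbf{x}_1^p,\mathbf{x}_2^{p+1},\dots,\mathbf{x}_{n-p}^{n-1})$ and $Y=(x_{p+1},\dots,x_n)$; $X',Y'$ likewise from $\mathbf{x}'$. For a tuple $\mathbf{v}=(v_1,\dots,v_m)$ and kernel $\kappa$, $\mathbf{K}^\kappa(\mathbf{v})=[\kappa(v_i,v_j)]_{i,j\le m}$; $\cdot$ is concatenation. $N=n+n'-2p$, $\mathbf{K}_1=\mathbf{K}^{\kappa_1}(X\cdot X')$, $\mathbf{K}_2=\mathbf{K}^{\kappa_2}(Y\cdot Y')$. $\Delta$ is the $N\times N$ diagonal matrix with first $n-p$ diagonal entries $\frac{1}{2(n-p)}$ and last $n'-p$ entries $\frac{1}{2(n'-p)}$. $\mathbf{S}_N^+$ is the cone of $N\times N$ symmetric positive semidefinite matrices; $A\preceq B$ means $B-A\in\mathbf{S}_N^+$. $g(Q)=\log|Q+\Delta^{-1}|$ ($|\cdot|$ the determinant), $f(Q,R)=(1-\alpha)g(Q)+\alpha g(R)$, $C_{n,n'}=(n-p)\log(2(n-p))+(n'-p)\log(2(n'-p))$, and $\varphi_\kappa(\mathbf{x},\mathbf{x}')=C_{n,n'}+f(\mathbf{K}_1,\mathbf{K}_1+\mathbf{K}_2)$. *)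

From HB Require Import structures.
From mathcomp Require Import all_boot all_order all_algebra.
From mathcomp Require Import reals sequences exp.
From mathcomp Require Import zify.
Import Order.TTheory GRing.Theory Num.Theory.
Local Open Scope ring_scope.

Section Defs.
Variable R : realType.

(* positive definite kernel (kernel-methods sense): symmetric, and every
   Gram matrix is positive semidefinite *)
Definition pd_kernel {T : Type} (k : T -> T -> R) : Prop :=
  (forall x y, k x y = k y x) /\
  forall (m : nat) (v : 'I_m -> T) (c : 'I_m -> R),
    0 <= \sum_(i < m) \sum_(j < m) c i * c j * k (v i) (v j).

Definition psd {m : nat} (A : 'M[R]_m) : Prop :=
  A^T = A /\ forall u : 'cV[R]_m, 0 <= (u^T *m A *m u) 0 0.

Definition loewner_le {m : nat} (A B : 'M[R]_m) : Prop := psd (B - A).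

Definition gram {T : Type} {m : nat} (k : T -> T -> R) (v : 'I_m -> T) : 'M[R]_m :=
  \matrix_(i, j) k (v i) (v j).

Definition frob {m : nat} (A : 'M[R]_m) : R :=
  Num.sqrt (\sum_(i < m) \sum_(j < m) A i j ^+ 2).

End Defs.
Arguments pd_kernel {R T}.
Arguments psd {R m}.
Arguments loewner_le {R m}.
Arguments gram {R T m}.
Arguments frob {R m}.

Definition tconcat {T : Type} {m k : nat} (v : 'I_m -> T) (w : 'I_k -> T)
  : 'I_(m + k) -> T :=
  fun i => match split i with inl a => v a | inr b => w b end.

Lemma win_lt (n p i j : nat) : (i < n - p -> j < p -> i + j < n)%N.
Proof. move=> hi hj; lia. Qed.

Lemma tgt_lt (n p i : nat) : (i < n - p -> i + p < n)%N.
Proof. move=> hi; lia. Qed.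

(* X : windows x_{i+1}^{i+p} (0-indexed: x_i, ..., x_{i+p-1}), i < n - p *)
Definition windows {X : Type} {n : nat} (p : nat) (x : 'I_n -> X)
  : 'I_(n - p) -> {ffun 'I_p -> X} :=
  fun i => [ffun j : 'I_p => x (Ordinal (@win_lt n p i j (ltn_ord i) (ltn_ord j)))].

(* Y : targets x_{i+p+1} (0-indexed: x_{i+p}), i < n - p *)
Definition targets {X : Type} {n : nat} (p : nat) (x : 'I_n -> X) : 'I_(n - p) -> X :=
  fun i => x (Ordinal (@tgt_lt n p i (ltn_ord i))).

Section Phi.
Variable R : realType.

Definition Delta (n n' p : nat) : 'M[R]_((n - p) + (n' - p)) :=
  diag_mx (\row_(i < (n - p) + (n' - p))
     match split i with
     | inl _ => (2 * (n - p)%:R)^-1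
     | inr _ => (2 * (n' - p)%:R)^-1
     end).

Definition gfun {n n' p : nat} (Q : 'M[R]_((n - p) + (n' - p))) : R :=
  ln (\det (Q + invmx (Delta n n' p))).

Definition grad_g {n n' p : nat} (Q : 'M[R]_((n - p) + (n' - p)))
  : 'M[R]_((n - p) + (n' - p)) :=
  invmx (Q + invmx (Delta n n' p)).

Definition ffun_ {n n' p : nat} (alpha : R) (Q S : 'M[R]_((n - p) + (n' - p))) : R :=
  (1 - alpha) * gfun Q + alpha * gfun S.

Definition Cnn (n n' p : nat) : R :=
  (n - p)%:R * ln (2 * (n - p)%:R) + (n' - p)%:R * ln (2 * (n' - p)%:R).

Definition K1 {X : Type} {n n' p : nat} (kappa1 : {ffun 'I_p -> X} -> {ffun 'I_p -> X} -> R)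
  (x : 'I_n -> X) (x' : 'I_n' -> X) : 'M[R]_((n - p) + (n' - p)) :=
  gram kappa1 (tconcat (windows p x) (windows p x')).

Definition K2 {X : Type} {n n' p : nat} (kappa2 : X -> X -> R)
  (x : 'I_n -> X) (x' : 'I_n' -> X) : 'M[R]_((n - p) + (n' - p)) :=
  gram kappa2 (tconcat (targets p x) (targets p x')).

Definition phi_kappa {X : Type} {n n' p : nat} (alpha : R)
  (kappa1 : {ffun 'I_p -> X} -> {ffun 'I_p -> X} -> R) (kappa2 : X -> X -> R)
  (x : 'I_n -> X) (x' : 'I_n' -> X) : R :=
  Cnn n n' p + ffun_ alpha (K1 kappa1 x x') (K1 kappa1 x x' + K2 kappa2 x x').

End Phi.
Arguments Delta {R}.
Arguments gfun {R n n' p}.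
Arguments grad_g {R n n' p}.
Arguments ffun_ {R n n' p}.
Arguments Cnn {R}.
Arguments K1 {R X n n' p}.
Arguments K2 {R X n n' p}.
Arguments phi_kappa {R X n n' p}.

From HB Require Import structures.
From mathcomp Require Import all_boot all_order all_algebra.
From mathcomp Require Import reals sequences exp.
From mathcomp Require Import ring lra.
Import Order.TTheory GRing.Theory Num.Theory.
Local Open Scope ring_scope.

(* For P positive definite and E positive semidefinite, a congruence L P L^T = 1
   turns det (P + E) / det P into det (1 + M) with M = L E L^T psd, and peeling
   off one row at a time by Schur complements (using 1 + m <= e^m) gives
   1 <= det (1 + M) <= exp (tr M) = exp (tr (P^-1 E)).  With P = G + Delta^-1 and
   E = K - G this says g (G) <= g (K) <= g (G) + tr (grad g (G) (K - G)), and
   Cauchy-Schwarz bounds the trace by the product of Frobenius norms.  Weighting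
   by 1 - alpha and alpha and exponentiating yields both inequalities. *)

Set Implicit Arguments.
Unset Strict Implicit.
Unset Printing Implicit Defensive.

Section QuadraticForms.
Variable R : realType.

Definition qf {n} (A : 'M[R]_n) (u : 'cV[R]_n) : R := (u^T *m A *m u) 0 0.

Definition posdef {n} (A : 'M[R]_n) : Prop :=
  A^T = A /\ forall u : 'cV[R]_n, u != 0 -> 0 < qf A u.

Lemma qf_congr n (L A : 'M[R]_n) u : qf (L *m A *m L^T) u = qf A (L^T *m u).
Proof. by rewrite /qf trmx_mul trmxK !mulmxA. Qed.

Lemma qf_block n (a : R) (B : 'rV[R]_n) (D : 'M[R]_n) (w : 'M[R]_1) (v : 'cV[R]_n) :
  qf (block_mx a%:M B B^T D) (col_mx w v) =
  a * w 0 0 ^+ 2 + 2 * w 0 0 * (B *m v) 0 0 + qf D v.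
Proof.
rewrite /qf tr_col_mx mul_row_block mul_row_col !mulmxDl.
rewrite [w]mx11_scalar tr_scalar_mx -!scalar_mxM mul_scalar_mx mul_mx_scalar -scalemxAl.
rewrite -[v^T *m B^T]trmx_mul [B *m v]mx11_scalar tr_scalar_mx !mxE.
by rewrite eqxx !mulr1n; ring.
Qed.

Lemma sym_blockP n (P : 'M[R]_(1 + n)) : P^T = P ->
  exists a (B : 'rV[R]_n) (D : 'M[R]_n), P = block_mx a%:M B B^T D /\ D^T = D.
Proof.
rewrite -[P]submxK tr_block_mx => /eq_block_mx [_ hCB _ hD].
by exists (ulsubmx P 0 0), (ursubmx P), (drsubmx P); rewrite -hCB trmxK -mx11_scalar.
Qed.

Section Schur.
Variables (n : nat) (a : R) (B : 'rV[R]_n) (D : 'M[R]_n).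
Hypothesis a_neq0 : a != 0.
Hypothesis D_sym : D^T = D.

Definition schur := D - a^-1 *: (B^T *m B).

Definition schur_elim : 'M[R]_(1 + n) := block_mx 1%:M 0 (- a^-1 *: B^T) 1%:M.

Lemma schur_elimP :
  schur_elim *m block_mx a%:M B B^T D *m schur_elim^T = block_mx a%:M 0 0 schur.
Proof.
rewrite /schur_elim tr_block_mx !trmx1 trmx0 linearZ /= trmxK.
rewrite !mulmx_block !mul1mx !mul0mx !mulmx0 !mulmx1 ?addr0 ?add0r.
rewrite mul_mx_scalar scalerA mulrN mulfV // scaleN1r addNr mul0mx add0r.
by rewrite mul_scalar_mx scalerA mulrN mulfV // scaleN1r addNr -scalemxAl scaleNr addrC.
Qed.

Lemma det_schur : \det (block_mx a%:M B B^T D) = a * \det schur.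
Proof.
have := congr1 determinant schur_elimP.
by rewrite !det_mulmx det_tr det_lblock !det1 !mul1r mulr1 det_ublock det_scalar1.
Qed.

Lemma schur_sym : schur^T = schur.
Proof. by rewrite /schur linearD linearN linearZ /= trmx_mul trmxK D_sym. Qed.

Lemma qf_schur v : qf schur v = qf (block_mx a%:M B B^T D) (col_mx (- a^-1 *: (B *m v)) v).
Proof.
have -> : qf schur v = qf (block_mx a%:M 0 (0 : 'rV[R]_n)^T schur) (col_mx 0 v).
  by rewrite qf_block !mxE expr0n /= !mulr0 !mul0r !add0r.
rewrite trmx0 -schur_elimP qf_congr /schur_elim tr_block_mx !trmx1 trmx0 linearZ /= trmxK.
by rewrite mul_block_col !mul1mx !mul0mx !add0r -scalemxAl.
Qed.

Lemma posdef_schur : posdef (block_mx a%:M B B^T D) -> posdef schur.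
Proof.
move=> [_ Ppos]; split=> [|v v0]; first exact: schur_sym.
by rewrite qf_schur Ppos // col_mx_eq0 negb_and v0 orbT.
Qed.

Lemma psd_schur : psd (block_mx a%:M B B^T D) -> psd schur.
Proof.
move=> [_ Ppos]; split=> [|v]; first exact: schur_sym.
by rewrite -/(qf _ _) qf_schur; apply: Ppos.
Qed.

End Schur.

Lemma qf_block_head n (a : R) (B : 'rV[R]_n) (D : 'M[R]_n) :
  qf (block_mx a%:M B B^T D) (col_mx 1 0) = a.
Proof. by rewrite qf_block mulmx0 /qf trmx0 !mul0mx !mxE expr1n mulr1 mulr0 !addr0. Qed.

Lemma posdef_block_gt0 n (a : R) (B : 'rV[R]_n) (D : 'M[R]_n) :
  posdef (block_mx a%:M B B^T D) -> 0 < a.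
Proof.
move=> [_ /(_ (col_mx 1 0))]; rewrite qf_block_head; apply.
by rewrite col_mx_eq0 negb_and oner_neq0.
Qed.

Lemma psd_block_ge0 n (a : R) (B : 'rV[R]_n) (D : 'M[R]_n) :
  psd (block_mx a%:M B B^T D) -> 0 <= a.
Proof. by move=> [_ /(_ (col_mx 1 0))]; rewrite -/(qf _ _) qf_block_head. Qed.

Lemma psd_block_addl n (a c : R) (B : 'rV[R]_n) (D : 'M[R]_n) : 0 <= c ->
  psd (block_mx a%:M B B^T D) -> psd (block_mx (c + a)%:M B B^T D).
Proof.
move=> c_ge0 [Psym Ppos]; split.
  by move: Psym; rewrite !tr_block_mx !tr_scalar_mx trmxK => /eq_block_mx [_ _ _ ->].
move=> u; rewrite -/(qf _ _) -[u]vsubmxK qf_block.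
have := Ppos (col_mx (usubmx u) (dsubmx u)); rewrite -/(qf _ _) qf_block.
have := sqr_ge0 (usubmx u 0 0); nra.
Qed.

Lemma posdef_congr1 n (P : 'M[R]_n) : posdef P ->
  exists2 L : 'M[R]_n, L \in unitmx & L *m P *m L^T = 1%:M.
Proof.
elim: n P => [|n IH] P Ppd.
  by exists 1%:M; [rewrite unitmxE det_mx00 unitr1 | apply/matrixP => -[]].
suff : exists2 L : 'M[R]_(1 + n), L \in unitmx & L *m P *m L^T = 1%:M by [].
have [a [B [D [PE D_sym]]]] := @sym_blockP n P Ppd.1.
move: P PE Ppd => _ -> Ppd.
have a_gt0 := posdef_block_gt0 Ppd; have a_neq0 : a != 0 by rewrite gt_eqF.
have [L' L'_unit L'E] := IH _ (posdef_schur a_neq0 D_sym Ppd).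
set t := (Num.sqrt a)^-1.
have tat : t * a * t = 1.
  by rewrite /t mulrAC -expr2 exprVn sqr_sqrtr ?ltW // mulVf.
exists (block_mx t%:M 0 0 L' *m schur_elim a B).
  rewrite unitmx_mul unitmxE det_ublock det_scalar1 unitrM -unitmxE L'_unit andbT.
  rewrite unitfE invr_eq0 sqrtr_eq0 -ltNge a_gt0 /=.
  by rewrite unitmxE /schur_elim det_lblock !det1 mulr1 unitr1.
rewrite trmx_mul !mulmxA -[_ *m schur_elim a B *m _]mulmxA -[X in X *m _]mulmxA.
rewrite schur_elimP // tr_block_mx !trmx0 tr_scalar_mx !mulmx_block.
by rewrite !mulmx0 !mul0mx ?addr0 ?add0r L'E -!scalar_mxM tat !mul0mx -scalar_mx_block.
Qed.

Lemma mxtrace_trmx_mul_ge0 n (B : 'rV[R]_n) : 0 <= \tr (B^T *m B).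
Proof.
rewrite mxtrace_mulC /mxtrace big_ord1 mxE.
by apply: sumr_ge0 => j _; rewrite mxE -expr2 sqr_ge0.
Qed.

Lemma psd_det1D_bounds n (M : 'M[R]_n) : psd M ->
  1 <= \det (1%:M + M) /\ \det (1%:M + M) <= expR (\tr M).
Proof.
elim: n M => [|n IH] M Mpsd.
  by rewrite det_mx00 /mxtrace big_ord0 expR0 lexx.
suff : 1 <= \det (1%:M + M : 'M[R]_(1 + n)) /\
       \det (1%:M + M : 'M[R]_(1 + n)) <= expR (\tr (M : 'M[R]_(1 + n))) by [].
have [m [B [D [ME D_sym]]]] := @sym_blockP n M Mpsd.1.
move: M ME Mpsd => _ -> Mpsd.
have m_ge0 := psd_block_ge0 Mpsd.
set a := 1 + m; have a_ge1 : 1 <= a by rewrite lerDl.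
have a_neq0 : a != 0 by rewrite gt_eqF // (lt_le_trans ltr01).
have [det_ge1 det_le] := IH _ (psd_schur a_neq0 D_sym (psd_block_addl ler01 Mpsd)).
have detE : \det (1%:M + block_mx m%:M B B^T D) = a * \det (1%:M + schur a B D).
  rewrite (scalar_mx_block 1 n) add_block_mx !add0r.
  have -> : (1%:M + m%:M : 'M[R]_1) = a%:M by rewrite -raddfD.
  by rewrite det_schur // /schur addrA.
have tr_le : \tr (schur a B D) <= \tr D.
  rewrite /schur raddfB /= mxtraceZ gerBl mulr_ge0 ?mxtrace_trmx_mul_ge0 //.
  by rewrite invr_ge0 addr_ge0.
rewrite detE mxtrace_block mxtrace_scalar mulr1n expRD; split.
  exact: mulr_ege1.
apply: (ler_pM _ _ (expR_ge1Dx m) (le_trans det_le _)); last by rewrite ler_expR.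
  exact: le_trans ler01 a_ge1.
exact: le_trans ler01 det_ge1.
Qed.

Lemma psd_congr n (L E : 'M[R]_n) : psd E -> psd (L *m E *m L^T).
Proof.
move=> [E_sym E_pos]; split; first by rewrite !trmx_mul trmxK E_sym mulmxA.
by move=> u; rewrite -/(qf _ _) qf_congr; apply: E_pos.
Qed.

Lemma det_posdefD_psd_bounds n (P E : 'M[R]_n) : posdef P -> psd E ->
  [/\ 0 < \det P, \det P <= \det (P + E)
    & \det (P + E) <= \det P * expR (\tr (invmx P *m E))].
Proof.
move=> /posdef_congr1 [L L_unit LPL] E_psd.
set M := L *m E *m L^T.
have [det_ge1 det_le] := psd_det1D_bounds (psd_congr L E_psd).
have detL2P : \det L ^+ 2 * \det P = 1.
  by have := congr1 determinant LPL; rewrite !det_mulmx det_tr det1 mulrAC expr2.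
have dL2_gt0 : 0 < \det L ^+ 2 by rewrite exprn_even_gt0 //= -unitfE -unitmxE.
have detP_gt0 : 0 < \det P by rewrite -(pmulr_rgt0 _ dL2_gt0) detL2P ltr01.
have detPE : \det (P + E) = \det P * \det (1%:M + M).
  have := congr1 determinant (_ : L *m (P + E) *m L^T = 1%:M + M).
  rewrite !det_mulmx det_tr mulmxDr mulmxDl LPL => /(_ erefl) <-.
  by rewrite -[LHS]mul1r -detL2P; ring.
have invP : invmx P = L^T *m L.
  have PLL : P *m (L^T *m L) = 1%:M.
    by apply: (can_inj (mulKmx L_unit)); rewrite mulmx1 !mulmxA LPL mul1mx.
  have [P_unit _] := mulmx1_unit PLL.
  by rewrite -[RHS](mulKmx P_unit) PLL mulmx1.
have trM : \tr M = \tr (invmx P *m E) by rewrite /M mxtrace_mulC invP !mulmxA.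
by rewrite detPE -trM; split; rewrite // ?ler_peMr ?ler_pM2l // ltW.
Qed.

Lemma posdef_unitmx n (P : 'M[R]_n) : posdef P -> P \in unitmx.
Proof.
by case/posdef_congr1=> L _ /mulmx1_unit [+ _]; rewrite unitmx_mul => /andP [].
Qed.

Lemma posdef_invmx n (P : 'M[R]_n) : posdef P -> posdef (invmx P).
Proof.
move=> Ppd; have P_unit := posdef_unitmx Ppd; case: Ppd => P_sym P_pos.
split=> [|u u_neq0]; first by rewrite trmx_inv P_sym.
have Pu_neq0 : invmx P *m u != 0.
  by apply: contraNneq u_neq0 => Pu0; rewrite -(mulKVmx P_unit u) Pu0 mulmx0.
have := P_pos _ Pu_neq0.
by rewrite /qf trmx_mul trmx_inv P_sym -!mulmxA (mulmxA P) mulmxV // mul1mx.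
Qed.

Lemma psd_posdefD n (G P : 'M[R]_n) : psd G -> posdef P -> posdef (G + P).
Proof.
move=> [G_sym G_pos] [P_sym P_pos]; split=> [|u u_neq0].
  by rewrite linearD /= G_sym P_sym.
by rewrite /qf mulmxDr mulmxDl mxE ltr_wpDl ?P_pos //; apply: G_pos.
Qed.

Lemma posdef_diag_mx n (d : 'rV[R]_n) : (forall i, 0 < d 0 i) -> posdef (diag_mx d).
Proof.
move=> d_gt0; split=> [|u u_neq0]; first by rewrite tr_diag_mx.
have -> : qf (diag_mx d) u = \sum_j d 0 j * u j 0 ^+ 2.
  by rewrite /qf mul_mx_diag mxE; apply: eq_bigr => j _; rewrite !mxE; ring.
have term_ge0 j : 0 <= d 0 j * u j 0 ^+ 2 by rewrite mulr_ge0 ?sqr_ge0 ?ltW.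
rewrite lt_def sumr_ge0 // andbT; apply: contra u_neq0 => /eqP sum0.
apply/eqP/matrixP => i j; rewrite ord1 mxE.
have /eqP := psumr_eq0P (fun j _ => term_ge0 j) sum0 (i := i) isT.
by rewrite mulf_eq0 gt_eqF //= sqrf_eq0 => /eqP.
Qed.

Lemma sum_mul_le_sqrt (I : finType) (x y : I -> R) :
  \sum_i x i * y i <= Num.sqrt (\sum_i x i ^+ 2) * Num.sqrt (\sum_i y i ^+ 2).
Proof.
set a := \sum_i x i ^+ 2; set b := \sum_i x i * y i; set c := \sum_i y i ^+ 2.
have a_ge0 : 0 <= a by apply: sumr_ge0 => i _; rewrite sqr_ge0.
have c_ge0 : 0 <= c by apply: sumr_ge0 => i _; rewrite sqr_ge0.
have discr t : 0 <= t ^+ 2 * a - 2 * t * b + c.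
  have -> : t ^+ 2 * a - 2 * t * b + c = \sum_i (t * x i - y i) ^+ 2.
    rewrite /a /b /c !mulr_sumr -sumrB -big_split /=.
    by apply: eq_bigr => i _; ring.
  by apply: sumr_ge0 => i _; rewrite sqr_ge0.
have b2_le : b ^+ 2 <= a * c.
  have [a0|a_neq0] := eqVneq a 0.
    have x0 i : x i = 0.
      apply/eqP; rewrite -sqrf_eq0; apply/eqP.
      exact: (psumr_eq0P (fun i _ => sqr_ge0 (x i)) a0).
    by rewrite a0 mul0r /b big1 ?expr0n // => i _; rewrite x0 mul0r.
  have := discr (b / a); have : b / a * a = b by rewrite mulfVK.
  move: (b / a) => t; nra.
rewrite -sqrtrM // (le_trans (ler_norm _)) // -sqrtr_sqr ler_sqrt //.
exact: mulr_ge0.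
Qed.

Lemma mxtrace_mul_le_frob n (A B : 'M[R]_n) : \tr (A *m B) <= frob A * frob B.
Proof.
rewrite /mxtrace; under eq_bigr do rewrite mxE.
rewrite /frob (exchange_big _ _ _ _ _ (fun i j => B i j ^+ 2)) !pair_big /=.
exact: sum_mul_le_sqrt.
Qed.

End QuadraticForms.

Lemma Delta_posdef (R : realType) n n' p :
  (p < n)%N -> (p < n')%N -> posdef (@Delta R n n' p).
Proof.
move=> lt_pn lt_pn'; apply: posdef_diag_mx => i; rewrite mxE.
by case: split => _; rewrite invr_gt0 mulr_gt0 // ltr0n subn_gt0.
Qed.

Lemma gfun_loewner_bounds (R : realType) n n' p (G K : 'M[R]_((n - p) + (n' - p))) :
  (p < n)%N -> (p < n')%N -> psd G -> loewner_le G K ->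
  gfun G <= gfun K /\ gfun K <= gfun G + frob (grad_g G) * frob (K - G).
Proof.
move=> lt_pn lt_pn' G_psd GK; set P := G + invmx (Delta n n' p).
have P_pd : posdef P := psd_posdefD G_psd (posdef_invmx (Delta_posdef R lt_pn lt_pn')).
have [detP_gt0 detP_le det_le] := det_posdefD_psd_bounds P_pd GK.
have KE : K + invmx (Delta n n' p) = P + (K - G) by rewrite [RHS]addrC addrA subrK.
rewrite /gfun /grad_g KE -/P.
split; first by rewrite ler_ln ?posrE // (lt_le_trans detP_gt0).
apply: le_trans (_ : ln (\det P * expR (\tr (invmx P *m (K - G)))) <= _).
  by rewrite ler_ln ?posrE ?mulr_gt0 ?expR_gt0 // (lt_le_trans detP_gt0).
by rewrite lnM ?posrE ?expR_gt0 // expRK lerD2l mxtrace_mul_le_frob.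
Qed.

Theorem theorem3 (R : realType) (X : Type) (p n n' : nat) (alpha : R)
  (kappa1 : {ffun 'I_p -> X} -> {ffun 'I_p -> X} -> R) (kappa2 : X -> X -> R)
  (x : 'I_n -> X) (x' : 'I_n' -> X)
  (G1 G2 : 'M[R]_((n - p) + (n' - p))) :
  (1 <= p)%N -> 0 < alpha -> alpha <= 1 ->
  pd_kernel kappa1 -> pd_kernel kappa2 ->
  (p < n)%N -> (p < n')%N ->
  psd G1 -> psd G2 ->
  loewner_le G1 (K1 kappa1 x x') ->
  loewner_le G2 (K1 kappa1 x x' + K2 kappa2 x x') ->
  let eps1 := K1 kappa1 x x' - G1 in
  let eps2 := K1 kappa1 x x' + K2 kappa2 x x' - G2 in
  let rho := expR ((1 - alpha) * frob (grad_g G1) * frob eps1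
                   + alpha * frob (grad_g G2) * frob eps2) - 1 in
  expR (- phi_kappa alpha kappa1 kappa2 x x')
    <= expR (- @Cnn R n n' p - ffun_ alpha G1 G2)
  /\ expR (- @Cnn R n n' p - ffun_ alpha G1 G2)
    <= (1 + rho) * expR (- phi_kappa alpha kappa1 kappa2 x x').
Proof.
move=> _ alpha_gt0 alpha_le1 _ _ lt_pn lt_pn' G1_psd G2_psd G1_le G2_le eps1 eps2 rho.
have [g1_le k1_le] := gfun_loewner_bounds lt_pn lt_pn' G1_psd G1_le.
have [g2_le k2_le] := gfun_loewner_bounds lt_pn lt_pn' G2_psd G2_le.
rewrite /rho addrCA subrr addr0 -expRD !ler_expR /phi_kappa /ffun_ /eps1 /eps2.
split; nra.
Qed.
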